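(* Let $T$ be a threshold graph with clique number $d$, clique vector $\mathfrak{c}(T)=(c_1,\ldots,c_d)$ and $b$-vector $\mathfrak{b}(T)=(b_1,\ldots,b_d)$. Then \[ \sum_{i=1}^d b_i(x+1)^{i-1}=\sum_{i=1}^d c_i x^{i-1}. \]
   Context: For a graph $G$, $S(G)$ denotes the graph obtained from $G$ by adding a new vertex adjacent to all vertices of $G$, and $D(G)$ the graph obtained by adding a new isolated vertex. For a word $w=w_1\cdots w_n$ over $\{S,D\}$ with $w_n=S$, the threshold graph with word $w$ is $w_1(w_2(\cdots w_n(\emptyset)\cdots))$, $\emptyset$ being the graph with no vertices; every threshold graph arises from exactly one such word. The clique number $d$ of a threshold graph equals the number of letters $S$ in its word. The $b$-vector of a threshold graph $T$ with word $w$ is defined as follows: insert a separator right after every occurrence of $S$ in $w$, thereby cutting $w$ into $d$ consecutive subwords (read left to right), each ending with $S$; $b_i$ is the length of the $i$-th subword. (Example: $w=DDDSSDSDDS$ splits as $DDDS/S/DS/DDS$, giving $\mathfrak{b}=(4,1,2,3)$.) The clique vector $\mathfrak{c}(G)=(c_1,\ldots,c_d)$ of a graph $G$ records the number $c_i$ of cliques with exactly $i$ vertices, $d$ being the clique number. *)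

From HB Require Import structures.
From mathcomp Require Import all_boot all_order all_algebra.
Set Implicit Arguments. Unset Strict Implicit. Unset Printing Implicit Defensive.
Import GRing.Theory.

(* Words over {S,D} are encoded as seq bool: true = S, false = D.
   The word w = w_1 ... w_n is the list [:: w_1; ...; w_n]. *)

(* The threshold graph with word w: vertex k : 'I_(size w) is the vertex
   created by the letter w_(k+1).  Since w_1 is applied last, a vertex k is
   created after all vertices with larger index, and is adjacent to all of
   them iff its letter is S. *)
Definition threshold_rel (w : seq bool) : rel 'I_(size w) :=
  fun i j => (i != j) && nth false w (minn i j).

Definition clique_count (T : finType) (e : rel T) (k : nat) : nat :=
  #|[set A : {set T} | (#|A| == k) &&
      [forall x in A, forall y in A, (x != y) ==> e x y]]|.

(* b-vector: cut the word right after every S; record the lengths of the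
   pieces, left to right.  acc = length of the current (unfinished) piece. *)
Fixpoint bvec_aux (acc : nat) (w : seq bool) : seq nat :=
  match w with
  | [::] => [::]
  | true :: w' => acc.+1 :: bvec_aux 0 w'
  | false :: w' => bvec_aux acc.+1 w'
  end.

Definition bvec (w : seq bool) : seq nat := bvec_aux 0 w.

(* Clique number of the threshold graph = number of letters S. *)
Definition nS (w : seq bool) : nat := count id w.

Example bvec_example :
  bvec [:: false; false; false; true; true; false; true; false; false; true]
  = [:: 4; 1; 2; 3].
Proof. reflexivity. Qed.

From mathcomp Require Import all_boot all_order all_algebra.
Import GRing.Theory.

Set Implicit Arguments.
Unset Strict Implicit.
Unset Printing Implicit Defensive.

(* Let s_m be the number of letters S among the first m letters of the word.
   The letter at position m ends up in piece s_m of the b-vector, so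
   sum_i b_i Y^i = sum_m Y^(s_m).  A clique whose largest vertex is m is m
   together with an arbitrary set of S-positions before m, so
   c_(k+1) = sum_m binomial(s_m, k); expanding (X + 1)^(s_m) by the binomial
   theorem then matches the two sides term by term in m. *)

Definition clique (T : finType) (e : rel T) (A : {set T}) :=
  [forall x in A, forall y in A, (x != y) ==> e x y].

Lemma count_take_sum (s : seq bool) (m : nat) : m <= size s ->
  count id (take m s) = \sum_(j < m) nth false s j.
Proof.
elim: m => [|m IH] lt_ms; first by rewrite take0 big_ord0.
by rewrite (take_nth false lt_ms) -cats1 count_cat IH ?(ltnW lt_ms) // big_ord_recr /= addn0.
Qed.

Section ThresholdCliques.

Variable w : seq bool.
Local Notation V := 'I_(size w).

Definition S_before (m : V) : {set V} := [set j : V | (j < m) && nth false w j].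

Lemma card_S_before (m : V) : #|S_before m| = nS (take m w).
Proof.
rewrite -sum1dep_card /nS count_take_sum ?(ltnW (ltn_ord m)) //.
rewrite (big_ord_widen _ (fun j => nth false w j : nat) (ltnW (ltn_ord m))).
rewrite [LHS]big_mkcond [RHS]big_mkcond /=.
by apply: eq_bigr => j _; case: (j < m); case: nth.
Qed.

Definition is_max (m : V) (A : {set V}) := (m \in A) && [forall x in A, x <= m].

Lemma is_max_unique (A : {set V}) (m m' : V) : is_max m A -> is_max m' A -> m = m'.
Proof.
move=> /andP [mA /forall_inP le_m] /andP [m'A /forall_inP le_m'].
by apply/val_inj/eqP; rewrite eqn_leq le_m' ?le_m.
Qed.

Lemma is_max_exists (A : {set V}) : A != set0 -> exists m, is_max m A.
Proof.
case/set0Pn => x xA; case: (arg_maxnP val xA) => m mA le_m.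
by exists m; apply/andP; split => //; apply/forall_inP.
Qed.

Lemma sum_is_max (A : {set V}) : A != set0 -> \sum_(m : V) is_max m A = 1.
Proof.
case/is_max_exists => m Am; rewrite (bigD1 m) //= Am big1 // => m' m'm.
by case: (boolP (is_max m' A)) => // Am'; rewrite (is_max_unique Am' Am) eqxx in m'm.
Qed.

Lemma threshold_clique_setU1 (m : V) (B : {set V}) : {in B, forall x : V, x < m} ->
  clique (@threshold_rel w) (m |: B) = (B \subset S_before m).
Proof.
move=> ltB; apply/forall_inP/subsetP.
  move=> cl x xB; have xm : x != m by rewrite neq_ltn ltB.
  have /forall_inP/(_ m (setU11 m B)) := cl x (setU1r m xB).
  by rewrite /threshold_rel xm (minn_idPl (ltnW (ltB x xB))) inE ltB.
move=> sB x /setU1P xmB; apply/forall_inP => y /setU1P ymB.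
have S_B z : z \in B -> nth false w z by move=> /sB; rewrite inE => /andP [].
case: xmB ymB => [-> | xB] [-> | yB]; apply/implyP => xy; rewrite /threshold_rel xy /=.
- by rewrite eqxx in xy.
- by rewrite minnC (minn_idPl (ltnW (ltB y yB))) S_B.
- by rewrite (minn_idPl (ltnW (ltB x xB))) S_B.
- by case: leqP => _; apply: S_B.
Qed.

Definition cliques (k : nat) : {set {set V}} :=
  [set A : {set V} | (#|A| == k) && clique (@threshold_rel w) A].

Lemma cliques_with_max (m : V) (k : nat) :
  #|[set A in cliques k.+1 | is_max m A]| = 'C(nS (take m w), k).
Proof.
have notin_m (B : {set V}) : B \subset S_before m -> m \notin B.
  by move=> sB; apply/negP => /(subsetP sB); rewrite inE ltnn.
have lt_m (B : {set V}) : B \subset S_before m -> {in B, forall x : V, x < m}.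
  by move=> sB x /(subsetP sB); rewrite inE => /andP [].
have -> : [set A in cliques k.+1 | is_max m A] =
          [set m |: B | B in [set B : {set V} | B \subset S_before m & #|B| == k]].
  apply/setP => A; rewrite !inE; apply/idP/imsetP.
    case/andP => /andP [/eqP cardA clA] /andP [mA /forall_inP le_m].
    have lt_m' : {in A :\ m, forall x : V, x < m}.
      by move=> x /setD1P [xm /le_m]; rewrite ltn_neqAle xm.
    exists (A :\ m); last by rewrite setD1K.
    rewrite inE -threshold_clique_setU1 // setD1K // clA.
    by rewrite /= -eqSS -cardA (cardsD1 m A) mA.
  case=> B; rewrite inE => /andP [sB /eqP cardB] ->.
  rewrite cardsU1 notin_m // cardB eqxx (threshold_clique_setU1 (lt_m B sB)) sB /=.
  rewrite /is_max setU11; apply/forall_inP => x /setU1P [-> // | /(lt_m _ sB)/ltnW //].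
rewrite card_in_imset ?cards_draws ?card_S_before // => B1 B2.
rewrite !inE => /andP [/notin_m m1 _] /andP [/notin_m m2 _] eqB.
by rewrite -(setU1K m1) eqB setU1K.
Qed.

Lemma threshold_clique_count (k : nat) :
  clique_count (@threshold_rel w) k.+1 = \sum_(m < size w) 'C(nS (take m w), k).
Proof.
transitivity (\sum_(A in cliques k.+1) \sum_(m : V) is_max m A).
  rewrite -[LHS]/#|cliques k.+1| -sum1_card.
  apply: eq_bigr => A; rewrite inE => /andP [/eqP cardA _].
  by rewrite sum_is_max // -card_gt0 cardA.
rewrite exchange_big; apply: eq_bigr => m _.
by rewrite -cliques_with_max -sum1dep_card big_mkcondr.
Qed.

End ThresholdCliques.

Local Open Scope ring_scope.

Lemma sum_pow_nS_take_cons (R : pzSemiRingType) (Y : R) (b : bool) (w : seq bool) :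
  \sum_(m < size (b :: w)) Y ^+ nS (take m (b :: w))
  = 1 + Y ^+ b * \sum_(m < size w) Y ^+ nS (take m w).
Proof.
rewrite big_ord_recl /= expr0 mulr_sumr; congr (_ + _).
by apply: eq_bigr => m _; rewrite /nS /= exprD.
Qed.

Lemma sum_bvec_aux (R : comPzSemiRingType) (Y : R) (acc : nat) (w : seq bool) :
  last false w ->
  \sum_(i < nS w) (nth 0%N (bvec_aux acc w) i)%:R * Y ^+ i
  = acc%:R + \sum_(m < size w) Y ^+ nS (take m w).
Proof.
elim: w acc => [// | b w IH] acc; rewrite sum_pow_nS_take_cons.
case: w IH => [_ /= -> | c w IH last_bw].
  by rewrite big_ord1 big_ord0 expr0 mulr1 mulr0 addr0 natr1.
set l := c :: w in IH last_bw *.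
case: b last_bw => last_l.
- have -> : nS (true :: l) = (nS l).+1 by [].
  rewrite big_ord_recl /= expr0 mulr1.
  under eq_bigr do rewrite exprS mulrCA.
  by rewrite -mulr_sumr IH // add0r expr1 addrA natr1.
- have -> : nS (false :: l) = nS l by [].
  by rewrite /= IH // expr0 mul1r addrA natr1.
Qed.

Lemma exprD1n_widen (R : pzSemiRingType) (x : R) (s N : nat) : (s < N)%N ->
  (x + 1) ^+ s = \sum_(k < N) 'C(s, k)%:R * x ^+ k.
Proof.
move=> lt_sN; rewrite exprD1n (big_ord_widen N (fun k => x ^+ k *+ 'C(s, k)) lt_sN).
rewrite big_mkcond; apply: eq_bigr => k _.
by case: ltnP => [_ | /bin_small ->]; rewrite ?mulr_natl ?mul0r.
Qed.

Lemma nS_take_lt (w : seq bool) (m : nat) : last false w -> (m < size w)%N ->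
  (nS (take m w) < nS w)%N.
Proof.
rewrite -subn_gt0 -size_drop -[w in last _ w](cat_take_drop m) last_cat.
rewrite /nS -[w in (_ < count _ w)%N](cat_take_drop m) count_cat.
rewrite -{1}(addn0 (count id (take m w))) ltn_add2l -has_count.
case: (drop m w) => [// | d ds] last_ds _.
by apply/hasP; exists (last d ds); [apply: mem_last | exact: last_ds].
Qed.

Theorem proposition2p2 (w : seq bool) (Hw : last false w = true) :
  \sum_(i < nS w) ((nth 0%N (bvec w) i)%:R * ('X + 1) ^+ i)
  = \sum_(i < nS w) ((@clique_count _ (@threshold_rel w) i.+1)%:R * 'X ^+ i)
  :> {poly int}.
Proof.
rewrite /bvec sum_bvec_aux // add0r.
under [RHS]eq_bigr do rewrite threshold_clique_count natr_sum mulr_suml.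
rewrite exchange_big; apply: eq_bigr => m _.
exact: exprD1n_widen (nS_take_lt Hw (ltn_ord m)).
Qed.
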